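(* Let $b>0$, $m\in(0,1]$, let $h:J\to[0,\infty)$ with $(0,1)\subseteq J\subseteq\mathbb{R}$, $h\not\equiv0$, and $h^2$ Lebesgue integrable on $(0,1)$. Let $\varphi:[0,b]\to[0,b]$ and let $f:[0,b]\to\mathbb{R}$ be a Lebesgue measurable $\varphi_{h,m}$-convex function. Then for all $x,y\in[0,b]$ with $\varphi(x)\ne m\varphi(y)$, $$\frac{1}{m\varphi(y)-\varphi(x)}\int_{\varphi(x)}^{m\varphi(y)}f(u)\,f\big(\varphi(x)+m\varphi(y)-u\big)\,du\le\big[f^2(\varphi(x))+m^2f^2(\varphi(y))\big]\int_0^1h(t)h(1-t)\,dt+(m+1)\,f(\varphi(x))f(\varphi(y))\int_0^1h^2(t)\,dt.$$
   Context: Definition ($\varphi_{h,m}$-convexity). Let $b>0$, $m\in(0,1]$, $h:J\to[0,\infty)$ with $(0,1)\subseteq J$, $h\not\equiv 0$, and $\varphi:[0,b]\to[0,b]$. A function $f:[0,b]\to\mathbb{R}$ is called $\varphi_{h,m}$-convex if $f\ge 0$ and $f(t\varphi(x)+m(1-t)\varphi(y))\le h(t)f(\varphi(x))+m\,h(1-t)f(\varphi(y))$ for all $x,y\in[0,b]$, $t\in(0,1)$. Integrals over an interval with endpoints in reversed order are oriented, so the left-hand side is the average of a non-negative function over the interval between $\varphi(x)$ and $m\varphi(y)$ (a value in $[0,\infty]$). *)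

From HB Require Import structures.
From mathcomp Require Import all_boot all_order all_algebra.
From mathcomp Require Import all_classical all_reals all_analysis.
Set Implicit Arguments. Unset Strict Implicit. Unset Printing Implicit Defensive.
Import Order.TTheory GRing.Theory Num.Theory.
Local Open Scope ring_scope.
Local Open Scope classical_set_scope.

(* phi_{h,m}-convexity of f on [0,b] (functions are total on R; only their
   values on the relevant domains matter). *)
Definition phi_hm_convex (R : realType) (b m : R) (h phi f : R -> R) : Prop :=
  (forall x, 0 <= x <= b -> 0 <= f x) /\
  (forall x y t, 0 <= x <= b -> 0 <= y <= b -> 0 < t < 1 ->
     f (t * phi x + m * (1 - t) * phi y)
       <= h t * f (phi x) + m * h (1 - t) * f (phi y)).

(* Substituting u = t phi(x) + (1 - t) m phi(y) turns the average over the segment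
   into the integral over ]0,1[ of f(u(t)) f(u(1 - t)).  Applying phi_{h,m}-convexity
   to both factors and multiplying bounds this integrand by
     (f^2(phi x) + m^2 f^2(phi y)) h(t) h(1-t) + m f(phi x) f(phi y) (h^2(t) + h^2(1-t)).
   After integration the reflection t |-> 1 - t identifies the two square terms,
   and 2m <= m + 1 because m <= 1. *)

From HB Require Import structures.
From mathcomp Require Import all_boot all_order all_algebra.
From mathcomp Require Import all_classical all_reals all_analysis.
From mathcomp Require Import measurable_realfun ring lra.
Import Order.TTheory GRing.Theory Num.Theory.
Local Open Scope ring_scope.
Local Open Scope classical_set_scope.
Local Open Scope ereal_scope.

Local Notation mu := (@lebesgue_measure _).

Section segment_change_of_variables.
Context {R : realType}.
Implicit Types (a c : R) (A D : set R).

(* Typed on [measurableTypeR R] so that the pushforward of Lebesgue measure along it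
   is again a measure on the Lebesgue sigma-algebra. *)
Definition segment_point a c : measurableTypeR R -> measurableTypeR R :=
  fun t => (t * a + (1 - t) * c)%R.

Lemma segment_pointE a c t : segment_point a c t = (c + t * (a - c))%R.
Proof. by rewrite /segment_point; ring. Qed.

Lemma measurable_segment_point a c D : measurable_fun D (segment_point a c).
Proof.
by apply: measurable_funD; apply: measurable_funM => //; apply: measurable_funB.
Qed.

Lemma lebesgue_measure_segment_point a c A : a != c -> measurable A ->
  mu A = `|a - c|%:E * mu (segment_point a c @^-1` A).
Proof.
move=> ac mA; rewrite -subr_eq0 in ac.
(* both sides agree on half-open intervals, which determine Lebesgue measure *)
have := @lebesgue_measure_unique R
  (mscale (`|a - c|%:nng : {nonneg R})%R (pushforward mu (segment_point a c))).
move=> /(_ _ (measurable_segment_point a c setT)) -> //= _ [[x1 x2] _ <-].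
rewrite /mscale /=; unfold pushforward.
have [dpos|dneg] := ltP 0%R (a - c)%R.
  have -> : segment_point a c @^-1` `]x1, x2] =
      `]((x1 - c) / (a - c))%R, ((x2 - c) / (a - c))%R]%classic.
    apply/seteqP; split => t /=; rewrite !in_itv /= segment_pointE
      ?ltr_pdivrMr ?ler_pdivlMr ?ltr_pdivlMr ?ler_pdivrMr //; lra.
  rewrite !lebesgue_measure_itv /= !lte_fin ltr_pM2r ?invr_gt0 // ltrD2r.
  case: ifP => _; rewrite ?mule0 // -!EFinD -EFinM gtr0_norm //.
  by congr EFin; field; exact: lt0r_neq0.
have {}dneg : (a - c < 0)%R by rewrite lt_neqAle ac dneg.
have -> : segment_point a c @^-1` `]x1, x2] =
    `[((x2 - c) / (a - c))%R, ((x1 - c) / (a - c))%R[%classic.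
  apply/seteqP; split => t /=; rewrite !in_itv /= segment_pointE
    ?ltr_ndivrMr ?ler_ndivlMr ?ltr_ndivlMr ?ler_ndivrMr //; lra.
rewrite !lebesgue_measure_itv /= !lte_fin ltr_nM2r ?invr_lt0 // ltrD2r.
case: ifP => _; rewrite ?mule0 // -!EFinD -EFinM ltr0_norm //.
by congr EFin; field; exact: ltr0_neq0.
Qed.

Lemma ge0_integral_segment_point a c D (F : R -> \bar R) : a != c -> measurable D ->
  measurable_fun D F -> (forall u, D u -> 0 <= F u) ->
  \int[mu]_(u in D) F u =
  `|a - c|%:E * \int[mu]_(t in segment_point a c @^-1` D) F (segment_point a c t).
Proof.
move=> ac mD mF F0.
have mscaleE := @ge0_integral_mscale _ _ R (pushforward mu (segment_point a c)) D mD
  (`|a - c|%:nng : {nonneg R})%R F mF F0.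
have pushforwardE := @ge0_integral_pushforward _ _ _ _ R (segment_point a c)
  (measurable_segment_point a c setT) mu D F mD mF.
rewrite -pushforwardE; last by move=> u /set_mem; exact: F0.
rewrite -(mscaleE (measurable_segment_point a c setT)).
by apply: eq_measure_integral => A mA _ /=; exact: lebesgue_measure_segment_point.
Qed.

Lemma segment_point_onem a c t :
  segment_point a c (1 - t)%R = (a + c - segment_point a c t)%R.
Proof. by rewrite /segment_point; ring. Qed.

Lemma segment_point_itv lo hi a c t : (lo <= a <= hi)%R -> (lo <= c <= hi)%R ->
  (0 <= t <= 1)%R -> (lo <= segment_point a c t <= hi)%R.
Proof.
by rewrite /segment_point => /andP[? ?] /andP[? ?] /andP[? ?]; apply/andP; split; nra.
Qed.

Lemma segment_point_itv_min_max a c t : (0 <= t <= 1)%R ->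
  (Num.min a c <= segment_point a c t <= Num.max a c)%R.
Proof. by apply: segment_point_itv; rewrite ?ge_min ?le_max lexx ?orbT. Qed.

Lemma preimage_segment_point_itv a c : a != c ->
  segment_point a c @^-1` `[Num.min a c, Num.max a c] = `[0%R, 1%R].
Proof.
move=> ac; apply/seteqP; split => t /=; rewrite !in_itv /=; last first.
  exact: segment_point_itv_min_max.
rewrite segment_pointE; have [le_ac|lt_ca] := leP a c => /andP[t_ge t_le].
  have lt_ac : (a < c)%R by rewrite lt_neqAle ac.
  by apply/andP; split; nra.
by apply/andP; split; nra.
Qed.

Lemma measurable_fun_segment_point_comp {d} {T : measurableType d} {a c}
    {F : R -> T} :
  measurable_fun `[Num.min a c, Num.max a c] F ->
  measurable_fun (`]0%R, 1%R[ : set R) (F \o segment_point a c).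
Proof.
move=> mF; apply: measurable_comp mF (measurable_segment_point _ _ _) => //.
move=> _ [t /= t01 <-]; rewrite in_itv /= segment_point_itv_min_max //.
by move: t01; rewrite in_itv /= => /andP[/ltW -> /ltW ->].
Qed.

Lemma ge0_integral_segment_average a c (F : R -> \bar R) : a != c ->
  measurable_fun `[Num.min a c, Num.max a c] F ->
  (forall u, `[Num.min a c, Num.max a c] u -> 0 <= F u) ->
  (`|c - a|^-1)%:E * \int[mu]_(u in `[Num.min a c, Num.max a c]) F u =
  \int[mu]_(t in `]0%R, 1%R[) F (segment_point a c t).
Proof.
move=> ac mF F0.
rewrite (ge0_integral_segment_point _ _ _ _ ac) // preimage_segment_point_itv //.
rewrite distrC muleA -EFinM mulVf ?normr_eq0 ?subr_eq0 // mul1e.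
by rewrite integral_itv_bndoo //; exact: measurable_fun_segment_point_comp.
Qed.

Lemma ge0_integral_onem (F : R -> \bar R) :
  measurable_fun (`]0%R, 1%R[ : set R) F -> (forall t, `]0%R, 1%R[ t -> 0 <= F t) ->
  \int[mu]_(t in `]0%R, 1%R[) F (1 - t)%R = \int[mu]_(t in `]0%R, 1%R[) F t.
Proof.
move=> mF F0.
rewrite [RHS](ge0_integral_segment_point 0 1) ?(eq_sym 0%R) ?oner_neq0 //.
rewrite sub0r normrN normr1 mul1e.
have -> : segment_point 0 1 @^-1` `]0%R, 1%R[ = `]0%R, 1%R[.
  by apply/seteqP; split => t /=; rewrite !in_itv /= /segment_point => /andP[? ?];
    apply/andP; split; lra.
by apply: eq_integral => t _; rewrite /segment_point mulr0 add0r mulr1.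
Qed.

End segment_change_of_variables.

Lemma mem_itv_reflect {R : realFieldType} (lo hi u : R) :
  `[lo, hi] u -> `[lo, hi] (lo + hi - u)%R.
Proof. by rewrite /= !in_itv /= => /andP[? ?]; apply/andP; split; lra. Qed.

Lemma measurable_fun_mul_reflect_itv {R : realType} (E : set R) (lo hi : R)
    (f : R -> R) :
  measurable E -> `[lo, hi] `<=` E -> measurable_fun E f ->
  measurable_fun `[lo, hi] (fun u => f u * f (lo + hi - u))%R.
Proof.
move=> mE sub mf; apply: measurable_funM; first exact: measurable_funS mf.
apply: (measurable_comp (F := E)) mf _ => //; last exact: measurable_funB.
by move=> _ [u /mem_itv_reflect/sub ? <-].
Qed.

Lemma measurable_fun_sqr_ge0 {d} {T : measurableType d} {R : realType}
    (D : set T) (g : T -> R) :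
  (forall t, D t -> 0 <= g t)%R -> measurable_fun D (fun t => g t ^+ 2)%R ->
  measurable_fun D g.
Proof.
move=> g0 mg2; apply: (eq_measurable_fun (Num.sqrt \o (fun t => g t ^+ 2)%R)).
  by move=> t /set_mem Dt /=; rewrite sqrtr_sqr ger0_norm // g0.
apply: measurableT_comp => //; apply: continuous_measurable_fun.
exact: sqrt_continuous.
Qed.

Section phi_hm_convex_product.
Context {R : realType} {b m : R} {h phi f : R -> R}.
Hypothesis fconv : phi_hm_convex b m h phi f.
Context {x y : R}.
Hypotheses (xb : (0 <= x <= b)%R) (yb : (0 <= y <= b)%R).
Hypotheses (phixb : (0 <= phi x <= b)%R) (mphiyb : (0 <= m * phi y <= b)%R).

Lemma phi_hm_convex_mul_segment_point t : (0 < t < 1)%R ->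
  (0 <= f (segment_point (phi x) (m * phi y) t)
         * f (segment_point (phi x) (m * phi y) (1 - t)) <=
   (f (phi x) ^+ 2 + m ^+ 2 * f (phi y) ^+ 2) * (h t * h (1 - t))
   + m * (f (phi x) * f (phi y)) * (h t ^+ 2 + h (1 - t) ^+ 2))%R.
Proof.
case: fconv => f0 fle /andP[t0 t1]; set g := segment_point _ _.
have t01 : (0 <= t <= 1)%R by rewrite !ltW.
have onemt01 : (0 <= 1 - t <= 1)%R by apply/andP; split; lra.
have g_ge0 s : (0 <= s <= 1)%R -> (0 <= f (g s))%R.
  by move=> s01; apply/f0/segment_point_itv.
have gE s : g s = (s * phi x + m * (1 - s) * phi y)%R by rewrite /g /segment_point; ring.
have le_t : (f (g t) <= h t * f (phi x) + m * h (1 - t) * f (phi y))%R.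
  by rewrite gE; apply: fle => //; rewrite t0 t1.
have le_onem : (f (g (1 - t)) <= h (1 - t) * f (phi x) + m * h t * f (phi y))%R.
  have := fle x y (1 - t)%R xb yb; rewrite -gE subKr; apply.
  by apply/andP; split; lra.
rewrite mulr_ge0 ?g_ge0 //=.
rewrite [leRHS](_ : _ = (h t * f (phi x) + m * h (1 - t) * f (phi y))
  * (h (1 - t) * f (phi x) + m * h t * f (phi y)))%R; last by ring.
exact: ler_pM (g_ge0 _ t01) (g_ge0 _ onemt01) le_t le_onem.
Qed.

End phi_hm_convex_product.

Section ge0_integral_EFin.
Context {d} {T : measurableType d} {R : realType}.
Variables (nu : {measure set T -> \bar R}) (D : set T).
Hypothesis mD : measurable D.

Lemma ge0_integral_EFinD (F G : T -> R) :
  measurable_fun D F -> measurable_fun D G ->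
  (forall t, D t -> 0 <= F t)%R -> (forall t, D t -> 0 <= G t)%R ->
  \int[nu]_(t in D) (F t + G t)%:E =
  \int[nu]_(t in D) (F t)%:E + \int[nu]_(t in D) (G t)%:E.
Proof.
move=> mF mG F0 G0; under eq_integral do rewrite EFinD.
by apply: ge0_integralD => //;
  first [exact/measurable_EFinP | move=> t /F0 | move=> t /G0].
Qed.

Lemma ge0_integral_EFinZl (k : R) (F : T -> R) :
  measurable_fun D F -> (0 <= k)%R -> (forall t, D t -> 0 <= F t)%R ->
  \int[nu]_(t in D) (k * F t)%:E = k%:E * \int[nu]_(t in D) (F t)%:E.
Proof.
move=> mF k0 F0; under eq_integral do rewrite EFinM.
by apply: ge0_integralZl_EFin => //; first [exact/measurable_EFinP | move=> t /F0].
Qed.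

End ge0_integral_EFin.

Section integral_product_majorant.
Context {R : realType} (h : R -> R).
Local Notation I := (`]0%R, 1%R[ : set R).
Hypothesis h_ge0 : forall t, I t -> (0 <= h t)%R.
Hypothesis h2_integrable : mu.-integrable I (fun t => (h t ^+ 2)%:E).

Let onemI t : I t -> I (1 - t)%R.
Proof. by rewrite /= !in_itv /= => /andP[? ?]; apply/andP; split; lra. Qed.

Let h_onem_ge0 t : I t -> (0 <= h (1 - t))%R.
Proof. by move/onemI/h_ge0. Qed.

Let mh2 : measurable_fun I (fun t => h t ^+ 2)%R.
Proof. by apply/measurable_EFinP; exact: measurable_int h2_integrable. Qed.

Let mh : measurable_fun I h.
Proof. exact: measurable_fun_sqr_ge0 h_ge0 mh2. Qed.

Let mh_onem : measurable_fun I (fun t => h (1 - t))%R.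
Proof.
apply: (measurable_comp (F := I)) mh _ => //; last exact: measurable_funB.
by move=> _ [t /onemI ? <-].
Qed.

Let mhh : measurable_fun I (fun t => h t * h (1 - t))%R.
Proof. exact: measurable_funM. Qed.

Let msqs : measurable_fun I (fun t => h t ^+ 2 + h (1 - t) ^+ 2)%R.
Proof. by apply: measurable_funD => //; exact: measurable_funM. Qed.

Lemma integral_product_majorant (K L : R) : (0 <= K)%R -> (0 <= L)%R ->
  \int[mu]_(t in I) (K * (h t * h (1 - t)) + L * (h t ^+ 2 + h (1 - t) ^+ 2))%:E
  = K%:E * \int[mu]_(t in I) (h t * h (1 - t))%:E
    + L%:E * (\int[mu]_(t in I) (h t ^+ 2)%:E + \int[mu]_(t in I) (h t ^+ 2)%:E).
Proof.
move=> K0 L0.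
have hh_ge0 t : I t -> (0 <= h t * h (1 - t))%R.
  by move=> It; exact: mulr_ge0 (h_ge0 _ It) (h_onem_ge0 _ It).
have h2_ge0 t : I t -> (0 <= h t ^+ 2)%R by move=> _; exact: sqr_ge0.
have h2_onem_ge0 t : I t -> (0 <= h (1 - t) ^+ 2)%R by move=> _; exact: sqr_ge0.
have h2_sum_ge0 t : I t -> (0 <= h t ^+ 2 + h (1 - t) ^+ 2)%R.
  by move=> _; exact: addr_ge0 (sqr_ge0 _) (sqr_ge0 _).
rewrite ge0_integral_EFinD //; first last.
- by move=> t It; rewrite mulr_ge0 // h2_sum_ge0.
- by move=> t It; rewrite mulr_ge0 // hh_ge0.
- exact: measurable_funM.
- exact: measurable_funM.
rewrite !ge0_integral_EFinZl //.
rewrite ge0_integral_EFinD //; last exact: measurable_funM.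
congr (_ + _ * (_ + _)).
apply: (ge0_integral_onem (fun t => (h t ^+ 2)%:E)); first exact/measurable_EFinP.
by move=> t _; rewrite lee_fin sqr_ge0.
Qed.

(* The reflection [t |-> 1 - t] merges the two square terms, and [2 m <= m + 1]. *)
Lemma integral_le_product_majorant (m K L : R) (g : R -> R) :
  (0 <= m <= 1)%R -> (0 <= K)%R -> (0 <= L)%R -> measurable_fun I g ->
  (forall t, I t -> 0 <= g t <=
     K * (h t * h (1 - t)) + m * L * (h t ^+ 2 + h (1 - t) ^+ 2))%R ->
  \int[mu]_(t in I) (g t)%:E
    <= K%:E * \int[mu]_(t in I) (h t * h (1 - t))%:E
       + ((m + 1) * L)%:E * \int[mu]_(t in I) (h t ^+ 2)%:E.
Proof.
move=> /andP[m0 m1] K0 L0 mg g_bound.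
have sqr_le : (m * L)%:E *
      (\int[mu]_(t in I) (h t ^+ 2)%:E + \int[mu]_(t in I) (h t ^+ 2)%:E)
    <= ((m + 1) * L)%:E * \int[mu]_(t in I) (h t ^+ 2)%:E.
  have : \int[mu]_(t in I) (h t ^+ 2)%:E \is a fin_num.
    exact: integrable_fin_num h2_integrable.
  have : 0 <= \int[mu]_(t in I) (h t ^+ 2)%:E.
    by apply: integral_ge0 => t _; rewrite lee_fin sqr_ge0.
  case: (\int[mu]_(t in I) (h t ^+ 2)%:E) => // r r0 _.
  rewrite lee_fin in r0; rewrite -EFinD -!EFinM lee_fin -subr_ge0.
  have -> : ((m + 1) * L * r - m * L * (r + r) = (1 - m) * (L * r))%R by ring.
  by rewrite mulr_ge0 ?subr_ge0 ?mulr_ge0.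
apply: le_trans (leeD2l _ sqr_le).
rewrite -integral_product_majorant ?mulr_ge0 //.
apply: ge0_le_integral => //.
- by move=> t /g_bound /andP[].
- exact/measurable_EFinP.
- by apply/measurable_EFinP; apply: measurable_funD; apply: measurable_funM.
- by move=> t /g_bound /andP[_]; rewrite lee_fin.
Qed.

End integral_product_majorant.

Theorem theorem2p1 (R : realType) (b m : R) (J : set R) (h phi f : R -> R) :
  (0 < b)%R -> (0 < m <= 1)%R ->
  `]0%R, 1%R[ `<=` J ->
  (forall t, J t -> (0 <= h t)%R) ->
  (exists t, J t /\ h t <> 0%R) ->
  (@lebesgue_measure R).-integrable `]0%R, 1%R[ (fun t => ((h t) ^+ 2)%:E) ->
  (forall x, (0 <= x <= b)%R -> (0 <= phi x <= b)%R) ->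
  measurable_fun `[0%R, b] f ->
  phi_hm_convex b m h phi f ->
  forall x y, (0 <= x <= b)%R -> (0 <= y <= b)%R -> phi x <> (m * phi y)%R ->
    ((`|m * phi y - phi x|)^-1)%:E *
      \int[@lebesgue_measure R]_(u in `[Num.min (phi x) (m * phi y)%R,
                                         Num.max (phi x) (m * phi y)%R])
         (f u * f (phi x + m * phi y - u))%:E
    <= ((f (phi x)) ^+ 2 + m ^+ 2 * (f (phi y)) ^+ 2)%:E *
         \int[@lebesgue_measure R]_(t in `]0%R, 1%R[) (h t * h (1 - t)%R)%:E
       + ((m + 1) * f (phi x) * f (phi y))%:E *
         \int[@lebesgue_measure R]_(t in `]0%R, 1%R[) ((h t) ^+ 2)%:E.
Proof.
move=> _ /andP[m0 m1] J01 hJ _ h2_int phib mf fconv x y xb yb pxy.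
have [f_ge0 _] := fconv.
have /andP[px0 pxb] := phib x xb; have /andP[py0 pyb] := phib y yb.
have mpyb : (0 <= m * phi y <= b)%R by apply/andP; split; nra.
set lo := Num.min _ _; set hi := Num.max _ _.
have sub0b : `[lo, hi] `<=` `[0%R, b].
  by move=> u; rewrite /= !in_itv /= ge_min le_max => /andP[/orP[] ? /orP[] ?];
    apply/andP; split; lra.
have in0b u : `[lo, hi] u -> (0 <= u <= b)%R by move/sub0b; rewrite /= in_itv.
have reflect_lohi u : `[lo, hi] u -> `[lo, hi] (phi x + m * phi y - u)%R.
  by rewrite -(addr_min_max (phi x) (m * phi y)); exact: mem_itv_reflect.
have mF : measurable_fun `[lo, hi] (fun u => f u * f (phi x + m * phi y - u))%R.
  rewrite -(addr_min_max (phi x) (m * phi y)).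
  exact: measurable_fun_mul_reflect_itv mf.
rewrite ge0_integral_segment_average; last 3 first.
- exact/eqP.
- exact/measurable_EFinP.
- move=> u hu; rewrite lee_fin mulr_ge0 // f_ge0 // in0b //.
  exact: reflect_lohi.
rewrite -[((m + 1) * _ * _)%R]mulrA.
apply: integral_le_product_majorant => //.
- by move=> t /J01/hJ.
- by rewrite (ltW m0) m1.
- by apply: addr_ge0; [exact: sqr_ge0 | exact: mulr_ge0 (sqr_ge0 _) (sqr_ge0 _)].
- exact: mulr_ge0 (f_ge0 _ (phib x xb)) (f_ge0 _ (phib y yb)).
- exact: (measurable_fun_segment_point_comp mF).
- move=> t t01; rewrite -segment_point_onem.
  apply: (phi_hm_convex_mul_segment_point fconv xb yb (phib x xb) mpyb).
  by move: t01; rewrite /= in_itv.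
Qed.
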